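(* Let $\mathbb C$ be a pointed regular Mal'tsev category with finite limits and finite colimits, and let $W,X,Y$ be objects of $\mathbb C$. Then the morphism $$\langle [\iota_1,\iota_2,0],[\iota_1,0,\iota_2]\rangle\colon W+X+Y\to (W+X)\times_W(W+Y)$$ is a regular epimorphism. In particular, if $\mathbb C$ is a normal Mal'tsev category (with these properties), then this morphism is a normal epimorphism.
   Context: $\iota_i$ denote coproduct injections, $[a,b,c]$ the morphism out of a ternary coproduct with the given components, $\langle a,b\rangle$ pairing into a pullback; $(W+X)\times_W(W+Y)$ is the pullback of $[1,0]\colon W+X\to W$ and $[1,0]\colon W+Y\to W$. A Mal'tsev category is a finitely complete category in which every reflexive relation is an equivalence relation. A normal category is a regular pointed category in which every regular epimorphism is a normal epimorphism (a cokernel of some morphism). *)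

Set Implicit Arguments.
Set Universe Polymorphism.

Record Category : Type := {
  Ob :> Type;
  Hom : Ob -> Ob -> Type;
  idm : forall A, Hom A A;
  comp : forall A B C, Hom B C -> Hom A B -> Hom A C;
  comp_assoc : forall A B C D (h : Hom C D) (g : Hom B C) (f : Hom A B),
      comp h (comp g f) = comp (comp h g) f;
  comp_id_l : forall A B (f : Hom A B), comp (idm B) f = f;
  comp_id_r : forall A B (f : Hom A B), comp f (idm A) = f
}.

Arguments Hom {c} A B : rename.
Arguments idm {c} A : rename.
Arguments comp {c A B C} g f : rename.
Notation "g ∘ f" := (comp g f) (at level 40, left associativity).

Section Defs.
Variable C : Category.

Definition is_terminal (T : C) : Prop :=
  forall A : C, exists f : Hom A T, forall g : Hom A T, g = f.
Definition is_initial (I : C) : Prop :=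
  forall A : C, exists f : Hom I A, forall g : Hom I A, g = f.
Definition is_zero_obj (Z : C) : Prop := is_initial Z /\ is_terminal Z.

Definition is_zero_map {A B : C} (f : Hom A B) : Prop :=
  exists (Z : C) (g : Hom A Z) (h : Hom Z B), is_zero_obj Z /\ f = h ∘ g.

Definition is_pullback {A B S P : C} (f : Hom A S) (g : Hom B S)
  (p1 : Hom P A) (p2 : Hom P B) : Prop :=
  f ∘ p1 = g ∘ p2 /\
  forall (Q : C) (q1 : Hom Q A) (q2 : Hom Q B), f ∘ q1 = g ∘ q2 ->
    exists u : Hom Q P, (p1 ∘ u = q1 /\ p2 ∘ u = q2) /\
      forall v : Hom Q P, p1 ∘ v = q1 -> p2 ∘ v = q2 -> v = u.

Definition is_kernel_pair {A B K : C} (f : Hom A B) (k1 k2 : Hom K A) : Prop :=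
  is_pullback f f k1 k2.

Definition is_coproduct2 {A B S : C} (i1 : Hom A S) (i2 : Hom B S) : Prop :=
  forall (T : C) (f1 : Hom A T) (f2 : Hom B T),
    exists u : Hom S T, (u ∘ i1 = f1 /\ u ∘ i2 = f2) /\
      forall v : Hom S T, v ∘ i1 = f1 -> v ∘ i2 = f2 -> v = u.

Definition is_coproduct3 {A B D S : C} (i1 : Hom A S) (i2 : Hom B S)
  (i3 : Hom D S) : Prop :=
  forall (T : C) (f1 : Hom A T) (f2 : Hom B T) (f3 : Hom D T),
    exists u : Hom S T, (u ∘ i1 = f1 /\ u ∘ i2 = f2 /\ u ∘ i3 = f3) /\
      forall v : Hom S T, v ∘ i1 = f1 -> v ∘ i2 = f2 -> v ∘ i3 = f3 -> v = u.

Definition is_coequalizer {K A Q : C} (g h : Hom K A) (q : Hom A Q) : Prop :=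
  q ∘ g = q ∘ h /\
  forall (T : C) (t : Hom A T), t ∘ g = t ∘ h ->
    exists u : Hom Q T, u ∘ q = t /\ forall v : Hom Q T, v ∘ q = t -> v = u.

Definition is_regular_epi {A B : C} (f : Hom A B) : Prop :=
  exists (K : C) (g h : Hom K A), is_coequalizer g h f.

Definition is_cokernel {K A Q : C} (k : Hom K A) (q : Hom A Q) : Prop :=
  is_zero_map (q ∘ k) /\
  forall (T : C) (t : Hom A T), is_zero_map (t ∘ k) ->
    exists u : Hom Q T, u ∘ q = t /\ forall v : Hom Q T, v ∘ q = t -> v = u.

Definition is_normal_epi {A B : C} (f : Hom A B) : Prop :=
  exists (K : C) (k : Hom K A), is_cokernel k f.

Definition has_finite_limits : Prop :=
  (exists T : C, is_terminal T) /\
  forall (A B S : C) (f : Hom A S) (g : Hom B S),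
    exists (P : C) (p1 : Hom P A) (p2 : Hom P B), is_pullback f g p1 p2.

Definition has_finite_colimits : Prop :=
  (exists I : C, is_initial I) /\
  (forall A B : C, exists (S : C) (i1 : Hom A S) (i2 : Hom B S),
      is_coproduct2 i1 i2) /\
  (forall (K A : C) (g h : Hom K A),
      exists (Q : C) (q : Hom A Q), is_coequalizer g h q).

Definition is_pointed : Prop := exists Z : C, is_zero_obj Z.

Definition is_regular : Prop :=
  has_finite_limits /\
  (forall (A B K : C) (f : Hom A B) (k1 k2 : Hom K A),
      is_kernel_pair f k1 k2 ->
      exists (Q : C) (q : Hom A Q), is_coequalizer k1 k2 q) /\
  (forall (A B D P : C) (f : Hom A B) (g : Hom D B)
          (p1 : Hom P A) (p2 : Hom P D),
      is_pullback f g p1 p2 -> is_regular_epi g -> is_regular_epi p1).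

Definition jointly_monic {R X Y : C} (r1 : Hom R X) (r2 : Hom R Y) : Prop :=
  forall (T : C) (u v : Hom T R), r1 ∘ u = r1 ∘ v -> r2 ∘ u = r2 ∘ v -> u = v.

Definition is_reflexive_rel {R X : C} (r1 r2 : Hom R X) : Prop :=
  exists d : Hom X R, r1 ∘ d = idm X /\ r2 ∘ d = idm X.

Definition is_symmetric_rel {R X : C} (r1 r2 : Hom R X) : Prop :=
  exists s : Hom R R, r1 ∘ s = r2 /\ r2 ∘ s = r1.

Definition is_transitive_rel {R X : C} (r1 r2 : Hom R X) : Prop :=
  forall (P : C) (p q : Hom P R), is_pullback r2 r1 p q ->
    exists t : Hom P R, r1 ∘ t = r1 ∘ p /\ r2 ∘ t = r2 ∘ q.

Definition is_equivalence_rel {R X : C} (r1 r2 : Hom R X) : Prop :=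
  is_reflexive_rel r1 r2 /\ is_symmetric_rel r1 r2 /\ is_transitive_rel r1 r2.

Definition is_maltsev : Prop :=
  has_finite_limits /\
  forall (R X : C) (r1 r2 : Hom R X),
    jointly_monic r1 r2 -> is_reflexive_rel r1 r2 -> is_equivalence_rel r1 r2.

Definition is_normal_category : Prop :=
  is_regular /\ is_pointed /\
  forall (A B : C) (f : Hom A B), is_regular_epi f -> is_normal_epi f.

End Defs.

Arguments is_zero_map {C A B} f.
Arguments is_pullback {C A B S P} f g p1 p2.
Arguments is_kernel_pair {C A B K} f k1 k2.
Arguments is_coproduct2 {C A B S} i1 i2.
Arguments is_coproduct3 {C A B D S} i1 i2 i3.
Arguments is_coequalizer {C K A Q} g h q.
Arguments is_regular_epi {C A B} f.
Arguments is_cokernel {C K A Q} k q.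
Arguments is_normal_epi {C A B} f.
Arguments jointly_monic {C R X Y} r1 r2.
Arguments is_reflexive_rel {C R X} r1 r2.
Arguments is_symmetric_rel {C R X} r1 r2.
Arguments is_transitive_rel {C R X} r1 r2.
Arguments is_equivalence_rel {C R X} r1 r2.

(* Factor m as a regular epimorphism followed by a monomorphism n : I -> P and
   regard I as a relation between W+X and W+Y. In a Mal'tsev category every
   relation is difunctional: a R b, a' R b and a' R b' imply a R b'. For a
   generalized element (x, y) of P lying over w in W, the image of m contains
   (x, w), (w, w) and (w, y), the images of [i1,i2] x, i1 w and [i1,i3] y; hence
   it contains (x, y). So n is a split epimorphism, hence an isomorphism. *)
Set Implicit Arguments.

Section Elementary.
Variable C : Category.

Definition monic {A B : C} (f : Hom A B) : Prop :=
  forall (T : C) (x y : Hom T A), f ∘ x = f ∘ y -> x = y.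

Lemma regular_epi_cancel {A B : C} (f : Hom A B) :
  is_regular_epi f -> forall {T : C} {x y : Hom B T}, x ∘ f = y ∘ f -> x = y.
Proof.
  intros [K [g [h [Hfgh Huniv]]]] T x y Exy.
  destruct (Huniv T (x ∘ f)) as [w [_ Hw]].
  { rewrite <- !comp_assoc, Hfgh; reflexivity. }
  rewrite (Hw x eq_refl), (Hw y (eq_sym Exy)); reflexivity.
Qed.

Lemma pullback_factor {A B S P : C} (f : Hom A S) (g : Hom B S)
    (p1 : Hom P A) (p2 : Hom P B) :
  is_pullback f g p1 p2 -> forall {Q : C} {x : Hom Q A} {y : Hom Q B},
  f ∘ x = g ∘ y -> exists w : Hom Q P, p1 ∘ w = x /\ p2 ∘ w = y.
Proof.
  intros [_ Huniv] Q x y Exy.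
  destruct (Huniv Q x y Exy) as [w [Hw _]]; exists w; exact Hw.
Qed.

Lemma pullback_ext {A B S P : C} (f : Hom A S) (g : Hom B S)
    (p1 : Hom P A) (p2 : Hom P B) :
  is_pullback f g p1 p2 -> forall {Q : C} {x y : Hom Q P},
  p1 ∘ x = p1 ∘ y -> p2 ∘ x = p2 ∘ y -> x = y.
Proof.
  intros [Hsq Huniv] Q x y E1 E2.
  destruct (Huniv Q (p1 ∘ x) (p2 ∘ x)) as [w [_ Hw]].
  { rewrite !comp_assoc, Hsq; reflexivity. }
  rewrite (Hw x eq_refl eq_refl), (Hw y (eq_sym E1) (eq_sym E2)); reflexivity.
Qed.

Lemma pullback_jointly_monic {A B S P I : C} (f : Hom A S) (g : Hom B S)
    (p1 : Hom P A) (p2 : Hom P B) (n : Hom I P) :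
  is_pullback f g p1 p2 -> monic n -> jointly_monic (p1 ∘ n) (p2 ∘ n).
Proof.
  intros Hpb Hn T x y E1 E2; apply Hn.
  apply (pullback_ext Hpb); rewrite !comp_assoc; assumption.
Qed.

Lemma coproduct2_ext {A B S : C} (i1 : Hom A S) (i2 : Hom B S) :
  is_coproduct2 i1 i2 -> forall {T : C} {x y : Hom S T},
  x ∘ i1 = y ∘ i1 -> x ∘ i2 = y ∘ i2 -> x = y.
Proof.
  intros Hcop T x y E1 E2.
  destruct (Hcop T (x ∘ i1) (x ∘ i2)) as [w [_ Hw]].
  rewrite (Hw x eq_refl eq_refl), (Hw y (eq_sym E1) (eq_sym E2)); reflexivity.
Qed.

Lemma zero_map_unique {A B : C} (f g : Hom A B) :
  is_zero_map f -> is_zero_map g -> f = g.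
Proof.
  intros [Z [f1 [f2 [HZ ->]]]] [Z' [g1 [g2 [HZ' ->]]]].
  destruct (proj1 HZ Z') as [phi _].
  assert (Ef2 : f2 = g2 ∘ phi).
  { destruct (proj1 HZ B) as [c Hc]; rewrite (Hc f2), (Hc (g2 ∘ phi)); reflexivity. }
  assert (Eg1 : g1 = phi ∘ f1).
  { destruct (proj2 HZ' A) as [c Hc]; rewrite (Hc g1), (Hc (phi ∘ f1)); reflexivity. }
  rewrite Ef2, Eg1, comp_assoc; reflexivity.
Qed.

Lemma zero_map_postcomp {A B D : C} (f : Hom A B) (g : Hom B D) :
  is_zero_map f -> is_zero_map (g ∘ f).
Proof.
  intros [Z [f1 [f2 [HZ ->]]]].
  exists Z, f1, (g ∘ f2); split; [exact HZ | apply comp_assoc].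
Qed.

Lemma monic_split_epi_inverse {A B : C} {n : Hom A B} {j : Hom B A} :
  monic n -> n ∘ j = idm B -> j ∘ n = idm A.
Proof.
  intros Hn Hnj; apply Hn.
  rewrite comp_assoc, Hnj, comp_id_l, comp_id_r; reflexivity.
Qed.

Lemma regular_epi_comp_iso {A B D : C} {e : Hom A B} {n : Hom B D} {j : Hom D B} :
  is_regular_epi e -> n ∘ j = idm D -> j ∘ n = idm B -> is_regular_epi (n ∘ e).
Proof.
  intros [K [g [h [Hegh Huniv]]]] Hnj Hjn.
  exists K, g, h; split.
  { rewrite <- !comp_assoc, Hegh; reflexivity. }
  intros T t Ht.
  destruct (Huniv T t Ht) as [w [Hw Hwu]].
  exists (w ∘ j); split.
  - rewrite comp_assoc, <- (comp_assoc _ _ _ _ _ w j n), Hjn, comp_id_r; exact Hw.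
  - intros v Hv.
    assert (Evn : v ∘ n = w) by (apply Hwu; rewrite <- comp_assoc; exact Hv).
    rewrite <- Evn, <- comp_assoc, Hnj, comp_id_r; reflexivity.
Qed.

End Elementary.

Arguments monic {C A B} f.

Section Regular.
Variable C : Category.
Hypothesis HR : is_regular C.

Lemma regular_epi_pullback_cover {A B D : C} (e : Hom A B) (g : Hom D B) :
  is_regular_epi e ->
  exists (P : C) (p : Hom P D) (x : Hom P A), is_regular_epi p /\ g ∘ p = e ∘ x.
Proof.
  intros He.
  destruct HR as [[_ Hpb] [_ Hstab]].
  destruct (Hpb _ _ _ g e) as (P & p & x & HP).
  exists P, p, x; split; [exact (Hstab _ _ _ _ _ _ _ _ HP He) | exact (proj1 HP)].
Qed.

(* Pulling back along e twice covers the kernel pair of n by the kernel pair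
   of f, so the two projections of the former agree. *)
Lemma regular_coimage_monic {A B K I : C} (f : Hom A B) (k1 k2 : Hom K A)
    (e : Hom A I) {n : Hom I B} :
  is_kernel_pair f k1 k2 -> is_coequalizer k1 k2 e -> n ∘ e = f -> monic n.
Proof.
  intros Hk He Hne.
  assert (Hepi : is_regular_epi e) by (exists K, k1, k2; exact He).
  destruct HR as [[_ Hpb] _].
  destruct (Hpb _ _ _ n n) as (L & l1 & l2 & HL).
  destruct (regular_epi_pullback_cover l1 Hepi) as (L1 & p & x & Hp & Hx).
  destruct (regular_epi_pullback_cover (l2 ∘ p) Hepi) as (L2 & p' & y & Hp' & Hy).
  assert (Hxy : f ∘ (x ∘ p') = f ∘ y).
  { rewrite <- Hne, <- !comp_assoc, (comp_assoc _ _ _ _ _ e x p'), <- Hx,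
      <- Hy, !comp_assoc, (proj1 HL); reflexivity. }
  destruct (pullback_factor Hk Hxy) as [phi [Hphi1 Hphi2]].
  assert (El : l1 = l2).
  { apply (regular_epi_cancel Hp), (regular_epi_cancel Hp').
    rewrite Hx, Hy, <- comp_assoc, <- Hphi1, <- Hphi2, !comp_assoc, (proj1 He);
      reflexivity. }
  intros T a b Eab.
  destruct (pullback_factor HL Eab) as [t [<- <-]].
  rewrite El; reflexivity.
Qed.

Lemma regular_image_factorization {A B : C} (f : Hom A B) :
  exists (I : C) (e : Hom A I) (n : Hom I B),
    is_regular_epi e /\ monic n /\ n ∘ e = f.
Proof.
  destruct HR as [[_ Hpb] [Hcoeq _]].
  destruct (Hpb _ _ _ f f) as (K & k1 & k2 & Hk).
  destruct (Hcoeq _ _ _ f k1 k2 Hk) as (I & e & He).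
  destruct (proj2 He B f (proj1 Hk)) as [n [Hne _]].
  exists I, e, n; split; [exists K, k1, k2; exact He |].
  split; [exact (regular_coimage_monic Hk He Hne) | exact Hne].
Qed.

End Regular.

(* The relation D on R below relates x to y when some w satisfies
   r1 w = r1 x and r2 w = r2 y; it is reflexive, hence symmetric, and
   symmetry applied to (z, x) is difunctionality. *)
Lemma maltsev_difunctional (C : Category) (HM : is_maltsev C)
    (R A B : C) (r1 : Hom R A) (r2 : Hom R B) :
  jointly_monic r1 r2 ->
  forall {T : C} {x y z : Hom T R}, r2 ∘ x = r2 ∘ y -> r1 ∘ y = r1 ∘ z ->
  exists w : Hom T R, r1 ∘ w = r1 ∘ x /\ r2 ∘ w = r2 ∘ z.
Proof.
  intros Hr T x y z Hxy Hyz.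
  destruct HM as [[_ Hpb] HM].
  destruct (Hpb _ _ _ r1 r1) as (K & k1 & k2 & HK).
  destruct (Hpb _ _ _ (r2 ∘ k2) r2) as (D & d1 & d2 & HD).
  assert (Hdm : jointly_monic (k1 ∘ d1) d2).
  { intros U a b E1 E2.
    apply (pullback_ext HD); [| exact E2].
    apply (pullback_ext HK); rewrite !comp_assoc; [exact E1 |].
    apply Hr.
    - rewrite !comp_assoc, <- (proj1 HK), <- !comp_assoc,
        !(comp_assoc _ _ _ _ _ k1 d1), E1; reflexivity.
    - rewrite !comp_assoc, (proj1 HD), <- !comp_assoc, E2; reflexivity. }
  assert (Hdr : is_reflexive_rel (k1 ∘ d1) d2).
  { destruct (pullback_factor HK (eq_refl (r1 ∘ idm R))) as [d0 [Hd01 Hd02]].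
    assert (E : r2 ∘ k2 ∘ d0 = r2 ∘ idm R) by (rewrite <- comp_assoc, Hd02; reflexivity).
    destruct (pullback_factor HD E) as [d [Hd1 Hd2]].
    exists d; rewrite <- comp_assoc, Hd1; split; assumption. }
  destruct (HM _ _ _ _ Hdm Hdr) as [_ [[s [Hs1 Hs2]] _]].
  destruct (pullback_factor HK (eq_sym Hyz)) as [t0 [Ht01 Ht02]].
  assert (E : r2 ∘ k2 ∘ t0 = r2 ∘ x) by (rewrite <- comp_assoc, Ht02; exact (eq_sym Hxy)).
  destruct (pullback_factor HD E) as [t [Ht1 Ht2]].
  exists (k2 ∘ d1 ∘ s ∘ t); split.
  - rewrite !comp_assoc, <- (proj1 HK), <- !comp_assoc, (comp_assoc _ _ _ _ _ d1 s t),
      (comp_assoc _ _ _ _ _ k1 (d1 ∘ s) t), (comp_assoc _ _ _ _ _ k1 d1 s), Hs1, Ht2;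
      reflexivity.
  - rewrite !comp_assoc, (proj1 HD), <- (comp_assoc _ _ _ _ _ r2 d2 s), Hs2,
      <- !comp_assoc, Ht1, Ht01; reflexivity.
Qed.

Lemma copair_section (C : Category) {W X WX S V : C}
    {a1 : Hom W WX} {a2 : Hom X WX} {p : Hom WX W}
    {c1 : Hom W S} {c2 : Hom X S} {u : Hom S WX} {v : Hom S V} {b : Hom W V} :
  is_coproduct2 a1 a2 -> p ∘ a1 = idm W -> is_zero_map (p ∘ a2) ->
  u ∘ c1 = a1 -> u ∘ c2 = a2 -> v ∘ c1 = b -> is_zero_map (v ∘ c2) ->
  exists s : Hom WX S, u ∘ s = idm WX /\ v ∘ s = b ∘ p.
Proof.
  intros Hcop Hp1 Hp2 Hu1 Hu2 Hv1 Hv2.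
  destruct (Hcop S c1 c2) as [s [[Hs1 Hs2] _]].
  exists s; split; apply (coproduct2_ext Hcop).
  - rewrite <- comp_assoc, Hs1, Hu1, comp_id_l; reflexivity.
  - rewrite <- comp_assoc, Hs2, Hu2, comp_id_l; reflexivity.
  - rewrite <- !comp_assoc, Hs1, Hv1, Hp1, comp_id_r; reflexivity.
  - apply zero_map_unique; rewrite <- comp_assoc.
    + rewrite Hs2; exact Hv2.
    + apply zero_map_postcomp; exact Hp2.
Qed.

Theorem lemma2p2 (C : Category)
  (Hlim : has_finite_limits C) (Hcolim : has_finite_colimits C)
  (Hpt : is_pointed C) (Hreg : is_regular C) (Hmal : is_maltsev C)
  (W X Y : C)
  (* W + X *)
  (WX : C) (a1 : Hom W WX) (a2 : Hom X WX) (HWX : is_coproduct2 a1 a2)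
  (* W + Y *)
  (WY : C) (b1 : Hom W WY) (b2 : Hom Y WY) (HWY : is_coproduct2 b1 b2)
  (* W + X + Y *)
  (S : C) (c1 : Hom W S) (c2 : Hom X S) (c3 : Hom Y S)
  (HS : is_coproduct3 c1 c2 c3)
  (* [1,0] : W + X -> W  and  [1,0] : W + Y -> W *)
  (pX : Hom WX W) (HpX1 : pX ∘ a1 = idm W) (HpX2 : is_zero_map (pX ∘ a2))
  (pY : Hom WY W) (HpY1 : pY ∘ b1 = idm W) (HpY2 : is_zero_map (pY ∘ b2))
  (* the pullback (W+X) x_W (W+Y) *)
  (P : C) (q1 : Hom P WX) (q2 : Hom P WY) (HP : is_pullback pX pY q1 q2)
  (* [i1, i2, 0] : W+X+Y -> W+X  and  [i1, 0, i2] : W+X+Y -> W+Y *)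
  (u : Hom S WX) (Hu1 : u ∘ c1 = a1) (Hu2 : u ∘ c2 = a2) (Hu3 : is_zero_map (u ∘ c3))
  (v : Hom S WY) (Hv1 : v ∘ c1 = b1) (Hv2 : is_zero_map (v ∘ c2)) (Hv3 : v ∘ c3 = b2)
  (* the pairing <u, v> : W+X+Y -> (W+X) x_W (W+Y) *)
  (m : Hom S P) (Hm1 : q1 ∘ m = u) (Hm2 : q2 ∘ m = v) :
  is_regular_epi m /\ (is_normal_category C -> is_normal_epi m).
Proof.
  destruct (regular_image_factorization Hreg m) as (I & e & n & He & Hn & Hne).
  destruct (copair_section HWX HpX1 HpX2 Hu1 Hu2 Hv1 Hv2) as [sX [HusX HvsX]].
  destruct (copair_section HWY HpY1 HpY2 Hv1 Hv3 Hu1 Hu3) as [sY [HvsY HusY]].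
  assert (Hq1 : forall (T : C) (t : Hom T S), q1 ∘ n ∘ (e ∘ t) = u ∘ t).
  { intros T t; rewrite <- comp_assoc, (comp_assoc _ _ _ _ _ n e t), Hne, comp_assoc, Hm1;
      reflexivity. }
  assert (Hq2 : forall (T : C) (t : Hom T S), q2 ∘ n ∘ (e ∘ t) = v ∘ t).
  { intros T t; rewrite <- comp_assoc, (comp_assoc _ _ _ _ _ n e t), Hne, comp_assoc, Hm2;
      reflexivity. }
  destruct (maltsev_difunctional Hmal (pullback_jointly_monic HP Hn)
              (x := e ∘ (sX ∘ q1)) (y := e ∘ (c1 ∘ (pX ∘ q1))) (z := e ∘ (sY ∘ q2)))
    as [j [Hj1 Hj2]].
  - rewrite !Hq2, !comp_assoc, HvsX, Hv1; reflexivity.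
  - rewrite !Hq1, !comp_assoc, Hu1, HusY, <- !comp_assoc, (proj1 HP); reflexivity.
  - assert (Hnj : n ∘ j = idm P).
    { apply (pullback_ext HP); rewrite comp_id_r, comp_assoc.
      - rewrite Hj1, Hq1, comp_assoc, HusX, comp_id_l; reflexivity.
      - rewrite Hj2, Hq2, comp_assoc, HvsY, comp_id_l; reflexivity. }
    assert (Hm : is_regular_epi m).
    { rewrite <- Hne; exact (regular_epi_comp_iso He Hnj (monic_split_epi_inverse Hn Hnj)). }
    split; [exact Hm | intros [_ [_ Hnormal]]; exact (Hnormal _ _ m Hm)].
Qed.
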